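(* Let $\beta$ be a braid diagram on $n$ strands with underlying permutation $w$. If the standard $ab$-coloring is replaced by the opposite coloring (interchanging $a$ and $b$ on every arc), then the resulting endomorphisms of $[\beta]$ are obtained from the original ones by $x_i\mapsto h-x_i$, $x'_i\mapsto h-x'_i$, $\xi_i\mapsto-\xi_i$, $u\mapsto u$.
   Context: $\mathcal R=\mathbb Z[h,t]$; $[\beta]$ is Bar-Natan's formal Khovanov bracket of $\beta$ in the dotted cobordism category (relations: undotted sphere $0$, once-dotted sphere $1$, two dots $=h\cdot$one dot$+t$, neck-cutting with $-h$ correction). $\beta$ is oriented upward with bottom endpoints $P_1..P_n$, top endpoints $P'_1..P'_n$, and $P_i,P'_{w(i)}$ on the same strand. An admissible $ab$-coloring colors each arc $a$ or $b$ so that at every crossing the lower-left and upper-left arcs have the same color, different from the common color of the lower-right and upper-right arcs; the standard one has the $i$-th arc of the oriented resolution colored $a$ for odd $i$, $b$ for even $i$. Given a coloring: for a regular point $p$, $X_p$ is identity cobordisms with a dot on the component containing $p$; $x_p=X_p,\epsilon_p=1$ if $p$ is colored $a$, $x_p=h-X_p,\epsilon_p=-1$ if colored $b$; $x_i=x_{P_i}$, $x'_i=x_{P'_i}$. $\chi_c$ is the degree $-1$ reversal of the local differential at crossing $c$. For strand $i$ with crossings $c_1,\dots,c_r$ met from $P_i$ to $P'_{w(i)}$ and $p_j$ just before $c_j$, $\eta_j=\epsilon_{p_j}\chi_{c_j}$, $\xi_i=\sum_j\eta_j$, $u=\sum_i\sum_{j<j'}\eta_j\eta_{j'}$. *)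

From HB Require Import structures.
From mathcomp Require Import all_boot all_order all_algebra.
Set Implicit Arguments. Unset Strict Implicit. Unset Printing Implicit Defensive.
Import Order.TTheory GRing.Theory.
Local Open Scope ring_scope.

(* A braid diagram on n strands, oriented upward, is a word of crossings read
   bottom to top: the j-th crossing (0-indexed) is between positions k and k+1
   (0-indexed, k+1 < n); the boolean records its sign (not used below). *)
Definition braid_word := seq (nat * bool).

Definition wf_braid (n : nat) (w : braid_word) : Prop :=
  all (fun c => c.1.+1 < n)%N w.

Definition crossing_pos (w : braid_word) (j : nat) : nat := (nth (0%N, true) w j).1.

(* "Levels": level l (0 <= l <= size w) lies between crossing l-1 and crossing l.
   The arc piece at (level l, position p); an arc of the diagram is a union of
   such pieces.  P_i = (level 0, position i), P'_i = (level (size w), position i). *)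

Definition swap_at (k p : nat) : nat :=
  if p == k then k.+1 else if p == k.+1 then k else p.

Definition strand_pos (w : braid_word) (i l : nat) : nat :=
  foldl (fun p c => swap_at c.1 p) i (take l w).

Definition strand_crossings (w : braid_word) (i : nat) : seq nat :=
  [seq j <- iota 0 (size w) |
     (strand_pos w i j == crossing_pos w j) || (strand_pos w i j == (crossing_pos w j).+1)].

(* an ab-coloring of arc pieces: true = a, false = b *)
Definition coloring := nat -> nat -> bool.

Definition admissible (n : nat) (w : braid_word) (col : coloring) : Prop :=
  forall j, (j < size w)%N ->
    let k := crossing_pos w j in
    [/\ col j k = col j.+1 k, col j k.+1 = col j.+1 k.+1, col j k != col j k.+1 &
        forall p, (p < n)%N -> p != k -> p != k.+1 -> col j p = col j.+1 p].

(* standard coloring: the oriented resolution of a braid consists of n vertical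
   arcs; the i-th (1-indexed) is colored a for odd i, i.e. position p
   (0-indexed) is colored a iff p is even. *)
Definition std_coloring : coloring := fun _ p => ~~ odd p.

Definition opp_coloring (col : coloring) : coloring := fun l p => ~~ col l p.

Section Endos.
Variables (R : comPzRingType) (E : lalgType R) (h : R).
(* X l p : identity cobordisms with a dot on the component containing the point
   on arc piece (l,p);  chi j : the reversed local differential at crossing j *)
Variables (X : nat -> nat -> E) (chi : nat -> E).
Variables (w : braid_word) (col : coloring).

Definition xpt (l p : nat) : E := if col l p then X l p else h%:A - X l p.
Definition epspt (l p : nat) : E := if col l p then 1 else -1.

Definition x_bot (i : nat) : E := xpt 0 i.
Definition x_top (i : nat) : E := xpt (size w) i.

(* eta for crossing j, met by strand i at point p_j just before it *)
Definition eta (i j : nat) : E := epspt j (strand_pos w i j) * chi j.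

Definition xi (i : nat) : E := \sum_(j <- strand_crossings w i) eta i j.

Definition u_el (n : nat) : E :=
  \sum_(i < n)
    let s := strand_crossings w i in
    \sum_(a < size s) \sum_(b < size s | (a < b)%N)
       eta i (nth 0%N s a) * eta i (nth 0%N s b).
End Endos.

(* underlying permutation w(i) = strand_pos w i (size w) *)

From mathcomp Require Import all_boot all_order all_algebra.
Import GRing.Theory.
Local Open Scope ring_scope.

Section OppositeColoring.
Variables (R : comPzRingType) (E : lalgType R).
Implicit Types (col : coloring) (X : nat -> nat -> E) (chi : nat -> E).

Lemma xpt_opp (h : R) X col l p :
  xpt h X (opp_coloring col) l p = h%:A - xpt h X col l p.
Proof. by rewrite /xpt /opp_coloring; case: (col l p); rewrite /= ?subKr. Qed.

Lemma epspt_opp col l p : epspt E (opp_coloring col) l p = - epspt E col l p.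
Proof. by rewrite /epspt /opp_coloring; case: (col l p); rewrite ?opprK. Qed.

Lemma eta_opp chi w col i j :
  eta chi w (opp_coloring col) i j = - eta chi w col i j.
Proof. by rewrite /eta epspt_opp mulNr. Qed.

Lemma xi_opp chi w col i : xi chi w (opp_coloring col) i = - xi chi w col i.
Proof. by rewrite /xi -sumrN; apply: eq_bigr => j _; rewrite eta_opp. Qed.

Lemma u_el_opp chi w col n : u_el chi w (opp_coloring col) n = u_el chi w col n.
Proof.
rewrite /u_el; apply: eq_bigr => i _; apply: eq_bigr => a _.
by apply: eq_bigr => b _; rewrite !eta_opp mulrNN.
Qed.

End OppositeColoring.

Theorem proposition3p10 (R : comPzRingType) (E : lalgType R) (h : R)
  (n : nat) (w : braid_word) (X : nat -> nat -> E) (chi : nat -> E) :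
  wf_braid n w ->
  let col := std_coloring in
  let col' := opp_coloring std_coloring in
  [/\ forall i, (i < n)%N -> x_bot h X col' i = h%:A - x_bot h X col i,
      forall i, (i < n)%N -> x_top h X w col' i = h%:A - x_top h X w col i,
      forall i, (i < n)%N -> xi chi w col' i = - xi chi w col i &
      u_el chi w col' n = u_el chi w col n].
Proof.
move=> _ col col'; split=> [i _|i _|i _|]; first by rewrite /x_bot xpt_opp.
- by rewrite /x_top xpt_opp.
- exact: xi_opp.
- exact: u_el_opp.
Qed.
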